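(* Let $A\in\mathcal{C}_n$ have unit diagonal. Let $I_1,\dots,I_m$ be the elements of $\mathcal{I}=\operatorname{Supp}(\mathcal{M}(A))$ ordered by nondecreasing cardinality (each has cardinality at least 2), and let $m_2$ be the number with cardinality 2. Let $G_2(\mathcal{I})$ be the graph with vertex set $\{1,\dots,n\}$ and edges $I_1,\dots,I_{m_2}$, and let $G_{>2}(\mathcal{I})$ be the bipartite graph with vertex classes $V=\{1,\dots,n\}$, $W=\{m_2+1,\dots,m\}$, in which $(v,w)\in V\times W$ is an edge iff $v\in I_w$. Let $G_{2,1},\dots,G_{2,r}$ be the connected components of $G_2(\mathcal{I})$ which are bipartite. If the linear span of $\mathcal{M}(A)$ is $\mathbb{R}^n$, then there exist edges $(v_1,w_1),\dots,(v_r,w_r)$ of $G_{>2}(\mathcal{I})$ such that $v_j$ is a vertex of $G_{2,j}$ for all $j=1,\dots,r$ and $w_1,\dots,w_r$ are mutually different.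
   Context: $\mathcal{C}_n$ denotes the cone of copositive matrices: real symmetric $n\times n$ matrices $A$ with $x^TAx\ge 0$ for all $x\in\mathbb{R}^n_+$. A zero of $A$ is a nonzero $u\in\mathbb{R}^n_+$ with $u^TAu=0$; $\operatorname{Supp}(u)=\{i:u_i\ne0\}$; a zero $u$ is minimal if there is no zero $v$ with $\operatorname{Supp}(v)\subsetneq\operatorname{Supp}(u)$; $\mathcal{M}(A)$ is the set of minimal zeros and $\operatorname{Supp}(\mathcal{M}(A))=\{\operatorname{Supp}(u):u\in\mathcal{M}(A)\}$. *)

From HB Require Import structures.
From mathcomp Require Import all_boot all_order all_algebra.
Set Implicit Arguments. Unset Strict Implicit. Unset Printing Implicit Defensive.
Import Order.TTheory GRing.Theory Num.Theory.
Local Open Scope ring_scope.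

Section Copos.
Variables (R : realFieldType) (n : nat).
Implicit Types (A : 'M[R]_n) (u v : 'cV[R]_n).

Definition nonneg u : Prop := forall i, 0 <= u i 0.

Definition qform A u : R := (u^T *m A *m u) 0 0.

Definition copositive A : Prop :=
  A^T = A /\ forall x, nonneg x -> 0 <= qform A x.

Definition supp u : {set 'I_n} := [set i | u i 0 != 0].

Definition is_zero A u : Prop := nonneg u /\ u != 0 /\ qform A u = 0.

Definition minimal_zero A u : Prop :=
  is_zero A u /\ ~ exists v, is_zero A v /\ supp v \proper supp u.

Definition in_SuppM A (I : {set 'I_n}) : Prop :=
  exists u, minimal_zero A u /\ supp u = I.

Definition span_MA_full A : Prop :=
  forall y : 'cV[R]_n, exists (k : nat) (us : 'I_k -> 'cV[R]_n) (c : 'I_k -> R),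
    (forall l, minimal_zero A (us l)) /\ y = \sum_(l < k) c l *: us l.

Definition edge2 A (i j : 'I_n) : Prop := i <> j /\ in_SuppM A [set i; j].

Inductive conn2 A (i : 'I_n) : 'I_n -> Prop :=
| conn2_refl : conn2 A i i
| conn2_step j k : conn2 A i j -> edge2 A j k -> conn2 A i k.

Definition component2 A (C : {set 'I_n}) : Prop :=
  exists2 i0, i0 \in C & forall j, j \in C <-> conn2 A i0 j.

Definition bip_component2 A (C : {set 'I_n}) : Prop :=
  component2 A C /\
  exists col : 'I_n -> bool,
    forall i j, i \in C -> j \in C -> edge2 A i j -> col i <> col j.

End Copos.

From HB Require Import structures.
From mathcomp Require Import all_boot all_order all_algebra.
From mathcomp Require Import ring lra.
From mathcomp Require Import fingroup perm.
From Stdlib Require Import ClassicalEpsilon.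
Import Order.TTheory GRing.Theory Num.Theory.
Local Open Scope ring_scope.
Set Implicit Arguments. Unset Strict Implicit.

(* For a bipartite component C of
   G_2 with a fixed 2-colouring, let z_C be +1 / -1 on the two colour classes
   of C and 0 elsewhere.  A minimal zero with support of size <= 2 is a
   multiple of e_i + e_j for an edge {i, j} of G_2, so it is orthogonal to
   every z_C.  Minimal zeros with equal supports are proportional, so fixing
   one representative u_T for each support T of size > 2, a combination
   z = sum_C a_C z_C orthogonal to all u_T is orthogonal to all of M(A), hence
   to span M(A) = R^n; thus z = 0 and, the components being disjoint, a = 0.
   So the matrix (<z_C, u_T>)_{C, T} is row free, and a nonzero term in the
   Leibniz expansion of a nonsingular maximal minor gives an injection
   C |-> T_C with <z_C, u_{T_C}> != 0, whence C meets T_C. *)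

Section DotProduct.
Variables (R : realFieldType) (n : nat).
Implicit Types (x y : 'cV[R]_n).

Definition dot x y : R := \sum_l x l 0 * y l 0.

Lemma dotC x y : dot x y = dot y x.
Proof. by apply: eq_bigr => l _; rewrite mulrC. Qed.

Lemma dotZr x y c : dot x (c *: y) = c * dot x y.
Proof. by rewrite /dot mulr_sumr; apply: eq_bigr => l _; rewrite mxE mulrCA. Qed.

Lemma dot_suml k (xs : 'I_k -> 'cV[R]_n) (c : 'I_k -> R) y :
  dot (\sum_(r < k) c r *: xs r) y = \sum_(r < k) c r * dot (xs r) y.
Proof.
rewrite /dot (eq_bigr (fun l => \sum_r c r * (xs r l 0 * y l 0))); last first.
  by move=> l _; rewrite summxE mulr_suml; apply: eq_bigr => r _; rewrite mxE mulrA.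
by rewrite exchange_big; apply: eq_bigr => r _; rewrite mulr_sumr.
Qed.

Lemma dot_self_eq0 x : dot x x = 0 -> x = 0.
Proof.
move=> xx0; apply/matrixP => l j; rewrite ord1 mxE.
have sq_ge0 i : predT i -> 0 <= x i 0 * x i 0 by rewrite -expr2 sqr_ge0.
have /eqP := @psumr_eq0P _ _ predT (fun i => x i 0 * x i 0) sq_ge0 xx0 l isT.
by rewrite mulf_eq0 orbb => /eqP.
Qed.

Lemma dot_neq0_meet x y : dot x y != 0 -> exists l, x l 0 != 0 /\ y l 0 != 0.
Proof.
move=> nz; have /existsP [l] : [exists l, x l 0 * y l 0 != 0].
  apply: contraNT nz => /existsPn xy0.
  by apply/eqP/big1 => l _; apply/eqP/negbNE/xy0.
by rewrite mulf_eq0 negb_or => /andP[]; exists l.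
Qed.

Lemma sum_on_pair (F : 'I_n -> R) x i j :
  i != j -> (forall l, l != i -> l != j -> x l 0 = 0) ->
  \sum_l F l * x l 0 = F i * x i 0 + F j * x j 0.
Proof.
move=> ij x0; rewrite (bigD1 i) //= (bigD1 j) 1?eq_sym //= big1 ?addr0 //.
by move=> l /andP[li lj]; rewrite x0 ?mulr0.
Qed.

Lemma in_supp x i : (i \in supp x) = (x i 0 != 0).
Proof. by rewrite inE. Qed.

Lemma supp_nonempty x : x != 0 -> exists i, i \in supp x.
Proof.
move=> nz; apply/existsP; apply: contraNT nz => /existsPn x0.
by apply/eqP/matrixP => i j; rewrite !ord1 mxE; move: (x0 i); rewrite in_supp => /negbNE/eqP.
Qed.

End DotProduct.

(* Some
   maximal minor is nonsingular, so some term of its Leibniz expansion is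
   nonzero; that term's permutation provides the matching. *)
Lemma row_free_transversal (F : fieldType) (k N : nat) (M : 'M[F]_(k, N)) :
  row_free M -> exists2 g : 'I_k -> 'I_N, injective g & forall r, M r (g r) != 0.
Proof.
move=> freeM; have fullMT : row_full M^T by rewrite /row_full mxrank_tr.
pose f := fullrankfun fullMT; pose X := rowsub f M^T.
have detX : \det X != 0 by rewrite -unitfE -unitmxE fullrowsub_unit.
have [s /prodf_neq0 nzX] : exists s : 'S_k, \prod_i X i (s i) != 0.
  apply/existsP; apply: contraNT detX => /existsPn nzX.
  by apply/eqP/big1 => s _; rewrite (eqP (negbNE (nzX s))) mulr0.
exists (fun r => f ((s^-1)%g r)); first by move=> r1 r2 /fullrankfun_inj /perm_inj.
by move=> r; have := nzX ((s^-1)%g r) isT; rewrite permKV !mxE.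
Qed.

Section QuadraticForm.
Variables (R : realFieldType) (n : nat) (A : 'M[R]_n).

Lemma qform_dot u : qform A u = dot u (A *m u).
Proof. by rewrite /qform -mulmxA mxE; apply: eq_bigr => i _; rewrite mxE. Qed.

Lemma qform_add_delta u i t : A^T = A ->
  qform A (u + t *: delta_mx i 0) = qform A u + 2 * t * (A *m u) i 0 + t ^+ 2 * A i i.
Proof.
move=> symA; rewrite /qform.
set x := t *: delta_mx i 0.
have e1 : x^T *m A *m u = t *: row i (A *m u).
  by rewrite /x linearZ /= -!scalemxAl trmx_delta -mulmxA -rowE.
have e2 : u^T *m A *m x = t *: row i (A *m u).
  rewrite /x -scalemxAr -colE; congr (_ *: _).
  rewrite -[col i _]trmxK tr_col trmx_mul trmxK symA.
  by apply/matrixP => a b; rewrite !ord1 mxE.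
have e3 : x^T *m A *m x = (t * t) *: col i (row i A).
  by rewrite /x linearZ /= linearZ /= -!scalemxAl trmx_delta -rowE -colE scalerA.
rewrite linearD /= [(u + x)^T]linearD /= !mulmxDl e1 e2 e3 !mxE; ring.
Qed.

End QuadraticForm.

Section ZerosOfCopositive.
Variables (R : realFieldType) (n : nat) (A : 'M[R]_n).
Hypotheses (copA : copositive A) (diagA : forall i, A i i = 1).

(* At a zero u of A the gradient A u vanishes on supp u: otherwise moving u
   slightly along e_i, within the nonnegative orthant, makes the form
   negative. *)
Lemma zero_grad_supp u i : is_zero A u -> i \in supp u -> (A *m u) i 0 = 0.
Proof.
move=> [u_ge0 [_ qu0]]; rewrite in_supp => ui0.
have ui_gt0 : 0 < u i 0 by rewrite lt_def ui0 u_ge0.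
have perturb t : - u i 0 <= t -> 0 <= 2 * t * (A *m u) i 0 + t ^+ 2.
  move=> ht; have := copA.2 (u + t *: delta_mx i 0).
  rewrite qform_add_delta ?copA.1 // qu0 diagA add0r mulr1; apply=> l.
  rewrite !mxE; case: (eqVneq l i) => [->|_] /=; first by rewrite mulr1; lra.
  by rewrite mulr0 addr0.
set a := (A *m u) i 0 in perturb *; set p := u i 0 in ui_gt0 perturb *.
have [a_lt0|a_gt0|//] := ltgtP a 0.
  have : 0 <= 2 * - a * a + (- a) ^+ 2 by apply: perturb; lra.
  by rewrite expr2; nra.
have [p_le_a|a_lt_p] := lerP p a.
  have : 0 <= 2 * - p * a + (- p) ^+ 2 by apply: perturb; lra.
  by rewrite expr2; nra.
have : 0 <= 2 * - a * a + (- a) ^+ 2 by apply: perturb; lra.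
by rewrite expr2; nra.
Qed.

(* For two zeros with the same support, every difference v - t u is still
   annihilated by the form, since A u and A v vanish on the common support. *)
Lemma zero_diff_qform u v t :
  is_zero A u -> is_zero A v -> supp u = supp v -> qform A (v - t *: u) = 0.
Proof.
move=> zu zv e; rewrite qform_dot; apply: big1 => l _.
have -> : (A *m (v - t *: u)) l 0 = (A *m v) l 0 - t * (A *m u) l 0.
  by rewrite mulmxBr -scalemxAr !mxE.
case: (boolP (l \in supp u)) => lu.
  have lv : l \in supp v by rewrite -e.
  by rewrite (zero_grad_supp zu lu) (zero_grad_supp zv lv) mulr0 subr0 mulr0.
have lv : l \notin supp v by rewrite -e.
by move: lu lv; rewrite !in_supp !negbK !mxE => /eqP -> /eqP ->; rewrite mulr0 subr0 mul0r.
Qed.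

(* Minimal zeros are determined by their support up to a scalar: subtracting
   the largest multiple of u keeping v - t u nonnegative yields a zero with
   smaller support unless v - t u = 0. *)
Lemma minimal_zero_proportional u v :
  minimal_zero A u -> minimal_zero A v -> supp u = supp v -> exists c, v = c *: u.
Proof.
move=> [zu _] [zv minv] e.
have [i1 i1u] := supp_nonempty zu.2.1.
pose ratio i := v i 0 / u i 0.
have [i0 i0u ratio_min] := @arg_minP _ R 'I_n i1 (mem (supp u)) ratio i1u.
pose w := v - ratio i0 *: u.
have wE l : w l 0 = v l 0 - ratio i0 * u l 0 by rewrite !mxE.
have u_gt0 l : l \in supp u -> 0 < u l 0 by rewrite in_supp => h; rewrite lt_def h zu.1.
have off_supp l : l \notin supp u -> u l 0 = 0 /\ v l 0 = 0.
  by move=> lu; move: lu (lu); rewrite {2}e !in_supp !negbK => /eqP -> /eqP ->.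
have [w0|wn0] := eqVneq w 0.
  by exists (ratio i0); apply/eqP; rewrite -subr_eq0 -/w w0.
exfalso; apply: minv; exists w; split.
  split; last by split=> //; exact: zero_diff_qform zu zv e.
  move=> l; rewrite wE; case: (boolP (l \in supp u)) => lu.
    by rewrite subr_ge0 -ler_pdivlMr ?u_gt0 //; apply: ratio_min.
  by have [-> ->] := off_supp l lu; rewrite mulr0 subr0.
apply/properP; split.
  apply/subsetP => l; rewrite -e; apply: contraTT => lu.
  by rewrite in_supp negbK wE; have [-> ->] := off_supp l lu; rewrite mulr0 subr0.
exists i0; first by rewrite -e.
by rewrite in_supp negbK wE /ratio divfK ?subrr // -in_supp.
Qed.

(* A minimal zero with at most two support points is e_i + e_j up to a
   scalar, where {i, j} is an edge of G_2: a single support point is excluded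
   by the unit diagonal, and for two points (A v)_i = (A v)_j = 0 forces
   v_i = v_j. *)
Lemma minimal_zero_small_supp v : minimal_zero A v -> (#|supp v| <= 2)%N ->
  exists i j, [/\ i != j, edge2 A i j, v i 0 = v j 0 &
                forall l, l != i -> l != j -> v l 0 = 0].
Proof.
move=> mv; have [zv _] := mv.
have v_gt0 l : l \in supp v -> 0 < v l 0 by rewrite in_supp => h; rewrite lt_def h zv.1.
have grad0 l : l \in supp v -> \sum_k A l k * v k 0 = 0.
  by move=> lv; have := zero_grad_supp zv lv; rewrite mxE.
have [i0 i0v] := supp_nonempty zv.2.1.
case card_v: #|supp v| => [|[|[|m]]] // _.
- by move/cards0_eq: card_v => e; rewrite e inE in i0v.
- move/eqP/cards1P: card_v => [i e]; have iv : i \in supp v by rewrite e set11.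
  have := grad0 i iv; rewrite (bigD1 i) //= big1 ?addr0 ?diagA ?mul1r.
    by move=> vi0; have := v_gt0 i iv; rewrite vi0 ltxx.
  move=> l li; have : l \notin supp v by rewrite e in_set1.
  by rewrite in_supp negbK => /eqP ->; rewrite mulr0.
- move/eqP/cards2P: card_v => [i [j [ij e]]].
  have iv : i \in supp v by rewrite e !inE eqxx.
  have jv : j \in supp v by rewrite e !inE eqxx orbT.
  have off l : l != i -> l != j -> v l 0 = 0.
    by move=> li lj; apply/eqP/negbNE; rewrite -in_supp e !inE negb_or li lj.
  have Aji : A j i = A i j.
    by have := congr1 (fun M : 'M[R]_n => M i j) copA.1; rewrite mxE.
  have := grad0 i iv; have := grad0 j jv.
  rewrite !(sum_on_pair _ ij off) !diagA Aji !mul1r => gj gi.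
  exists i, j; split => //; last by have := v_gt0 i iv; have := v_gt0 j jv; nra.
  by split; [apply/eqP | exists v; split].
Qed.

End ZerosOfCopositive.

Section ConnectivityG2.
Variables (R : realFieldType) (n : nat) (A : 'M[R]_n).

Lemma edge2_sym i j : edge2 A i j -> edge2 A j i.
Proof. by case=> ne h; split; [by move=> e; apply: ne | rewrite setUC]. Qed.

Lemma conn2_trans i j k : conn2 A i j -> conn2 A j k -> conn2 A i k.
Proof. by move=> hij; elim=> [//|l m _ IH e]; apply: conn2_step IH e. Qed.

Lemma conn2_sym i j : conn2 A i j -> conn2 A j i.
Proof.
elim=> [|l m _ IH e]; first exact: conn2_refl.
by apply: conn2_trans IH; apply: conn2_step (conn2_refl _ _) (edge2_sym e).
Qed.

Lemma component2_closed C i j : component2 A C -> i \in C -> edge2 A i j -> j \in C.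
Proof. by move=> [i0 _ H] iC e; apply/H; apply: conn2_step e; apply/H. Qed.

Lemma component2_eq C1 C2 x :
  component2 A C1 -> component2 A C2 -> x \in C1 -> x \in C2 -> C1 = C2.
Proof.
move=> [p1 _ H1] [p2 _ H2] x1 x2.
have c1 := iffLR (H1 x) x1; have c2 := iffLR (H2 x) x2.
apply/setP => j; apply/idP/idP => h.
  by apply/H2; apply: conn2_trans c2 _; apply: conn2_trans (conn2_sym c1) _; apply/H1.
by apply/H1; apply: conn2_trans c1 _; apply: conn2_trans (conn2_sym c2) _; apply/H2.
Qed.

End ConnectivityG2.

Definition asbool (P : Prop) : bool :=
  if excluded_middle_informative P then true else false.

Lemma asboolP (P : Prop) : reflect P (asbool P).
Proof. by rewrite /asbool; case: excluded_middle_informative => h; constructor. Qed.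

Section SignVectors.
Variables (R : realFieldType) (n : nat) (A : 'M[R]_n).
Hypotheses (copA : copositive A) (diagA : forall i, A i i = 1).
Hypothesis spanA : span_MA_full A.

Definition proper_colouring (C : {set 'I_n}) (col : 'I_n -> bool) : Prop :=
  forall i j, i \in C -> j \in C -> edge2 A i j -> col i <> col j.

Definition colouring (C : {set 'I_n}) : 'I_n -> bool :=
  epsilon (inhabits (fun _ => true)) (proper_colouring C).

Definition sign_vec (C : {set 'I_n}) : 'cV[R]_n :=
  \col_l (if l \in C then (if colouring C l then 1 else -1) else 0).

Lemma sign_vec_edge C i j :
  bip_component2 A C -> edge2 A i j -> sign_vec C i 0 + sign_vec C j 0 = 0.
Proof.
move=> [compC colC] e.
have colP : proper_colouring C (colouring C) := epsilon_spec _ _ colC.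
rewrite !mxE; case: (boolP (i \in C)) => iC.
  have jC := component2_closed compC iC e; rewrite jC; have := colP i j iC jC e.
  by case: (colouring C i); case: (colouring C j) => // _; rewrite ?subrr ?addNr.
case: (boolP (j \in C)) => jC; last by rewrite addr0.
by have := component2_closed compC jC (edge2_sym e); rewrite (negPf iC).
Qed.

Lemma sign_vec_orth_small C v : bip_component2 A C -> minimal_zero A v ->
  (#|supp v| <= 2)%N -> dot (sign_vec C) v = 0.
Proof.
move=> bipC mv small; have [i [j [ij e vij off]]] := minimal_zero_small_supp copA diagA mv small.
by rewrite /dot (sum_on_pair _ ij off) vij -mulrDl (sign_vec_edge bipC e) mul0r.
Qed.

Definition bip_components : {set {set 'I_n}} :=
  [set C | asbool (bip_component2 A C)].

Definition large_supports : {set {set 'I_n}} :=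
  [set T | asbool (in_SuppM A T) && (2 < #|T|)%N].

Definition rep (T : {set 'I_n}) : 'cV[R]_n :=
  epsilon (inhabits 0) (fun u => minimal_zero A u /\ supp u = T).

Lemma repP T : in_SuppM A T -> minimal_zero A (rep T) /\ supp (rep T) = T.
Proof. exact: epsilon_spec. Qed.

Lemma enum_bip_component (r : 'I_#|bip_components|) : bip_component2 A (enum_val r).
Proof. by have := enum_valP r; rewrite inE => /asboolP. Qed.

(* The sign vectors of distinct bipartite components are independent: they
   have disjoint nonempty supports. *)
Lemma sign_vec_indep (a : 'I_#|bip_components| -> R) :
  \sum_r a r *: sign_vec (enum_val r) = 0 -> forall r, a r = 0.
Proof.
move=> z0 r; have [i0 i0C _] := (enum_bip_component r).1.
have /matrixP /(_ i0 0) := z0; rewrite summxE (bigD1 r) //= big1 ?addr0.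
  by rewrite !mxE i0C; case: colouring => /eqP; rewrite mulf_eq0 ?oppr_eq0 oner_eq0 orbF => /eqP.
move=> r' r'r; rewrite !mxE; case: (boolP (i0 \in enum_val r')) => i0C'; last by rewrite mulr0.
by have := component2_eq (enum_bip_component r').1 (enum_bip_component r).1 i0C' i0C => /enum_val_inj e; rewrite e eqxx in r'r.
Qed.

(* A combination of sign vectors orthogonal to the chosen representatives of
   all large supports vanishes: it is orthogonal to every minimal zero, hence
   to their span, which is everything. *)
Lemma sign_vec_comb_eq0 (a : 'I_#|bip_components| -> R) :
  (forall T, T \in large_supports -> dot (\sum_r a r *: sign_vec (enum_val r)) (rep T) = 0) ->
  \sum_r a r *: sign_vec (enum_val r) = 0.
Proof.
set z := \sum_r _ => z_orth_rep; apply: dot_self_eq0.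
have z_orth v : minimal_zero A v -> dot z v = 0.
  move=> mv; case: (leqP #|supp v| 2) => card_v.
    rewrite /z dot_suml big1 // => r _.
    by rewrite (sign_vec_orth_small (enum_bip_component r) mv card_v) mulr0.
  have suppv : in_SuppM A (supp v) by exists v.
  have [mrep srep] := repP suppv.
  have [c ->] := minimal_zero_proportional copA diagA mrep mv srep.
  by rewrite dotZr z_orth_rep ?mulr0 // inE card_v andbT; apply/asboolP.
have [k [us [c [mus zE]]]] := spanA z.
by rewrite {2}zE dotC dot_suml big1 // => l _; rewrite dotC z_orth ?mulr0.
Qed.

Definition incidence : 'M[R]_(#|bip_components|, #|large_supports|) :=
  \matrix_(r, t) dot (sign_vec (enum_val r)) (rep (enum_val t)).

(* The rows of the incidence matrix are independent: a vanishing row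
   combination is a combination of sign vectors orthogonal to every u_T. *)
Lemma incidence_row_free : row_free incidence.
Proof.
apply: inj_row_free => a aM0.
suff comb0 : \sum_r a 0 r *: sign_vec (enum_val r) = 0.
  by apply/rowP => r; rewrite (sign_vec_indep comb0) mxE.
apply: sign_vec_comb_eq0 => T LT.
have /rowP /(_ (enum_rank_in LT T)) := aM0; rewrite !mxE => <-.
by rewrite dot_suml; apply: eq_bigr => r' _; rewrite mxE enum_rankK_in.
Qed.

Lemma incidence_meet r t : incidence r t != 0 ->
  exists2 v, v \in enum_val r & v \in enum_val t.
Proof.
rewrite mxE => /dot_neq0_meet [l [zl ul]]; exists l.
  by move: zl; rewrite mxE; case: (l \in enum_val r); rewrite ?eqxx.
have := enum_valP t; rewrite inE => /andP[/asboolP /repP [_ <-] _].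
by rewrite in_supp.
Qed.

End SignVectors.

Unset Implicit Arguments.

Theorem lemma5p2 (R : realFieldType) (n : nat) (A : 'M[R]_n) :
  copositive A ->
  (forall i, A i i = 1) ->
  span_MA_full A ->
  exists f : {set 'I_n} -> {set 'I_n},
    (forall C, bip_component2 A C ->
       [/\ in_SuppM A (f C), (2 < #|f C|)%N & exists2 v, v \in C & v \in f C]) /\
    (forall C1 C2, bip_component2 A C1 -> bip_component2 A C2 ->
       f C1 = f C2 -> C1 = C2).
Proof.
move=> copA diagA spanA.
have [g g_inj g_nz] := row_free_transversal (incidence_row_free copA diagA spanA).
pose f C := if [pick r : 'I_#|bip_components A| | enum_val r == C] is Some r then enum_val (g r) else set0.
have fE r : f (enum_val r) = enum_val (g r).
  by rewrite /f; case: pickP => [r' /eqP /enum_val_inj -> // | /(_ r)]; rewrite eqxx.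
have enum_bip C : bip_component2 A C ->
    exists r : 'I_#|bip_components A|, enum_val r = C.
  move=> bipC; have CB : C \in bip_components A by rewrite inE; apply/asboolP.
  by exists (enum_rank_in CB C); rewrite enum_rankK_in.
exists f; split.
  move=> C /enum_bip [r <-]; rewrite fE.
  have := enum_valP (g r); rewrite inE => /andP[/asboolP suppT cardT].
  by split => //; apply: incidence_meet (g_nz r).
move=> C1 C2 /enum_bip [r1 <-] /enum_bip [r2 <-].
by rewrite !fE => /enum_val_inj /g_inj ->.
Qed.
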